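(* Let $\mathcal{D}$ be a document collection, fix a query $q$ with a unique relevant document $d_q$, and let $f\in[0,1]$. Consider a Repartition system: $r\ge1$ partitions $\{D^{(i)}_1,\dots,D^{(i)}_n\}$, $i=1,\dots,r$, of $\mathcal{D}$, each into $n$ pairwise disjoint shards, constructed independently at random, so that the indices of the shards containing $d_q$ in the different partitions are mutually independent; assume all partitions have the same probability distribution for $q$, i.e., there is $p:\{1,\dots,n\}\to[0,1]$ with $\sum_j p(j)=1$ and $\Pr[d_q\in D^{(i)}_j]=p(j)$ for all $i,j$. Consider also a Replication system consisting of $r$ identical replicas of one of these partitions. In both systems each of the $nr$ shards (replicas) resides on its own node, and each node independently fails to respond with probability $f$, independently of the location of $d_q$; the success probability of a selection of shards is the probability that $d_q$ lies in some selected shard (replica) whose node responds. Then for every shard selection used with the Replication system, there exists a shard selection for the Repartition system selecting the same number of shards whose success probability for $q$ is larger than or equal to that of the Replication selection.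
   Context: Distributed search model: each node searches only its own shard; the query is sent to the selected shards, and results of nodes that fail to respond are dropped. In Replication, all $r$ partitions are exact copies; in Repartition, the $r$ partitions are produced by independent applications of a randomized partitioning scheme. *)

From mathcomp Require Import all_boot all_order all_algebra.
Set Implicit Arguments. Unset Strict Implicit. Unset Printing Implicit Defensive.
Import Order.TTheory GRing.Theory Num.Theory.
Local Open Scope ring_scope.

(* Nodes are indexed by (i, j) : 'I_r * 'I_n : partition/replica i, shard j.
   A failure pattern says which nodes fail to respond; each node fails
   independently with probability f. *)
Definition fail_weight (R : realFieldType) (r n : nat) (f : R)
  (fl : {ffun 'I_r * 'I_n -> bool}) : R :=
  \prod_(x : 'I_r * 'I_n) (if fl x then f else 1 - f).

(* Replication: r identical copies of one partition; d_q lies in shard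
   loc : 'I_n (the same in every replica), with Pr[loc = j] = p j,
   independently of the failure pattern. *)
Definition repl_success (r n : nat) (S : {set 'I_r * 'I_n})
  (loc : 'I_n) (fl : {ffun 'I_r * 'I_n -> bool}) : bool :=
  [exists i : 'I_r, ((i, loc) \in S) && ~~ fl (i, loc)].

Definition repl_prob (R : realFieldType) (r n : nat) (p : 'I_n -> R) (f : R)
  (S : {set 'I_r * 'I_n}) : R :=
  \sum_(loc : 'I_n) \sum_(fl : {ffun 'I_r * 'I_n -> bool} | repl_success S loc fl)
     p loc * fail_weight f fl.

(* Repartition: r independently generated partitions; loc i is the index of
   the shard of partition i containing d_q; the loc i are mutually
   independent, each distributed according to p, and independent of the
   failure pattern. *)
Definition repart_success (r n : nat) (S : {set 'I_r * 'I_n})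
  (loc : {ffun 'I_r -> 'I_n}) (fl : {ffun 'I_r * 'I_n -> bool}) : bool :=
  [exists i : 'I_r, ((i, loc i) \in S) && ~~ fl (i, loc i)].

Definition repart_prob (R : realFieldType) (r n : nat) (p : 'I_n -> R) (f : R)
  (S : {set 'I_r * 'I_n}) : R :=
  \sum_(loc : {ffun 'I_r -> 'I_n})
    \sum_(fl : {ffun 'I_r * 'I_n -> bool} | repart_success S loc fl)
      (\prod_(i : 'I_r) p (loc i)) * fail_weight f fl.

From mathcomp Require Import all_boot all_order all_algebra.
From mathcomp Require Import ring lra.
Import Order.TTheory GRing.Theory Num.Theory.
Set Implicit Arguments. Unset Strict Implicit. Unset Printing Implicit Defensive.
Local Open Scope ring_scope.

(* Let k j be the number of selected replicas of shard j and J the (random)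
   index of the shard holding d_q.  The replication selection fails with
   probability E[f ^ k_J].  For repartition select shard j in the partitions
   i < k j (the staircase of k, which has as many shards): since d_q's shards
   in the r partitions are independent, this selection fails with probability
   prod_i E[g_i(J)], where g_i j = f if i < k j and 1 otherwise.  As f <= 1,
   all the g_i are nonincreasing functions of k j, hence pairwise similarly
   ordered, so iterating Chebyshev's sum inequality bounds prod_i E[g_i(J)]
   by E[prod_i g_i(J)] = E[f ^ k_J]. *)

Section GraphBig.
Variables (R : Type) (idx : R) (op : Monoid.com_law idx) (r n : nat).

Lemma big_graph (g : 'I_r -> 'I_n) (P : pred ('I_r * 'I_n)) (F : 'I_r * 'I_n -> R) :
  \big[op/idx]_(x | (x.2 == g x.1) && P x) F x = \big[op/idx]_(i | P (i, g i)) F (i, g i).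
Proof.
transitivity (\big[op/idx]_i \big[op/idx]_j
                (if (j == g i) && P (i, j) then F (i, j) else idx)).
  by rewrite pair_bigA big_mkcond; apply: eq_bigr => -[i j].
rewrite [RHS]big_mkcond; apply: eq_bigr => i _.
by rewrite (bigD1 (g i)) //= eqxx big1 ?Monoid.mulm1 // => j /negbTE ->.
Qed.
End GraphBig.

Section FailureWeight.
Variables (R : realFieldType) (r n : nat) (f : R).
Local Notation pattern := {ffun 'I_r * 'I_n -> bool}.
Implicit Type a : pred ('I_r * 'I_n).

(* Distribute the product over the nodes: a node of [a] contributes [f],
   any other node [f + (1 - f) = 1]. *)
Lemma sum_fail_weight_all_fail a :
  \sum_(fl : pattern | [forall x, a x ==> fl x]) fail_weight f fl = \prod_(x | a x) f.
Proof.
pose w x (b : bool) := if a x then (if b then f else 0) else (if b then f else 1 - f).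
transitivity (\sum_(fl : pattern) \prod_x w x (fl x)).
  rewrite big_mkcond; apply: eq_bigr => fl _; rewrite /fail_weight /w.
  case: ifP => [/forallP a_fail | /negbT/forallPn[x]].
    by apply: eq_bigr => x _; case: (a x) (a_fail x) => //= ->.
  by rewrite negb_imply => /andP[ax /negbTE flx]; rewrite (bigD1 x) //= ax flx mul0r.
rewrite -(bigA_distr_bigA w) [RHS]big_mkcond; apply: eq_bigr => x _.
by rewrite big_bool /w /=; case: (a x); rewrite ?addr0 ?subrKC.
Qed.

Lemma sum_fail_weight : \sum_(fl : pattern) fail_weight f fl = 1.
Proof.
have := sum_fail_weight_all_fail pred0; rewrite big_pred0_eq => <-.
by apply: eq_bigl => fl; apply/esym/forallP.
Qed.

Lemma sum_fail_weight_some_responds a :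
  \sum_(fl : pattern | [exists x, a x && ~~ fl x]) fail_weight f fl = 1 - \prod_(x | a x) f.
Proof.
have all_fail (fl : pattern) : [forall x, a x ==> fl x] = ~~ [exists x, a x && ~~ fl x].
  by rewrite negb_exists; apply: eq_forallb => x; rewrite negb_and negbK implybE.
rewrite -sum_fail_weight_all_fail (eq_bigl _ _ all_fail) -[X in X - _]sum_fail_weight.
by rewrite [in RHS](bigID [pred fl : pattern | [exists x, a x && ~~ fl x]]) addrK.
Qed.

Lemma sum_fail_weight_graph_responds (S : {set 'I_r * 'I_n}) (g : 'I_r -> 'I_n) :
  \sum_(fl : pattern | [exists i, ((i, g i) \in S) && ~~ fl (i, g i)]) fail_weight f fl
  = 1 - \prod_i (if (i, g i) \in S then f else 1).
Proof.
have graph_exists (fl : pattern) : [exists i, ((i, g i) \in S) && ~~ fl (i, g i)]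
    = [exists x, ((x.2 == g x.1) && (x \in S)) && ~~ fl x].
  apply/existsP/existsP => [[i Si_up] | [[i j] /= /andP[/andP[/eqP-> Si] fli]]].
    by exists (i, g i); rewrite /= eqxx.
  by exists i; rewrite Si.
by rewrite (eq_bigl _ _ graph_exists) sum_fail_weight_some_responds big_graph -big_mkcond.
Qed.

End FailureWeight.

Section Chebyshev.
Variables (R : realFieldType) (J : finType) (p : J -> R).
Hypotheses (p_ge0 : forall j, 0 <= p j) (p_sum1 : \sum_j p j = 1).

Definition comonotone (g h : J -> R) := forall a b, 0 <= (g a - g b) * (h a - h b).

Lemma chebyshev_sum (g h : J -> R) : comonotone g h ->
  (\sum_j p j * g j) * (\sum_j p j * h j) <= \sum_j p j * (g j * h j).
Proof.
move=> gh_co.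
have expect_mul u v : (\sum_j p j * u j) * (\sum_j p j * v j)
    = \sum_a \sum_b p a * p b * (u a * v b).
  by rewrite big_distrlr; apply: eq_bigr => a _; apply: eq_bigr => b _ /=; ring.
have expect_one : \sum_j p j * 1 = 1 by under eq_bigr do rewrite mulr1.
(* The symmetrized double sum below equals 2 (E[gh] - E[g] E[h]). *)
have : 0 <= \sum_a \sum_b p a * p b * ((g a - g b) * (h a - h b)).
  by do 2![apply: sumr_ge0 => ? _]; rewrite mulr_ge0 ?gh_co ?mulr_ge0.
have -> : \sum_a \sum_b p a * p b * ((g a - g b) * (h a - h b))
    = (\sum_j p j * (g j * h j)) * (\sum_j p j * 1)
      + (\sum_j p j * 1) * (\sum_j p j * (g j * h j))
      - ((\sum_j p j * g j) * (\sum_j p j * h j)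
         + (\sum_j p j * h j) * (\sum_j p j * g j)).
  rewrite !expect_mul -!big_split -sumrB; apply: eq_bigr => a _.
  by rewrite -!big_split -sumrB; apply: eq_bigr => b _ /=; ring.
rewrite expect_one; lra.
Qed.

Definition antitone_along (K : J -> nat) (g : J -> R) :=
  forall a b, (K a <= K b)%N -> g b <= g a.

Lemma antitone_along_comonotone K g h :
  antitone_along K g -> antitone_along K h -> comonotone g h.
Proof.
move=> g_anti h_anti a b; case: (leqP (K a) (K b)) => [Kab | /ltnW Kba].
  by rewrite mulr_ge0 // subr_ge0 (g_anti, h_anti).
by rewrite mulr_le0 // subr_le0 (g_anti, h_anti).
Qed.

Section Product.
Variables (I : Type) (K : J -> nat) (H : I -> J -> R).
Hypotheses (H_ge0 : forall i j, 0 <= H i j) (H_anti : forall i, antitone_along K (H i)).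

Lemma antitone_along_prod (s : seq I) : antitone_along K (fun j => \prod_(i <- s) H i j).
Proof.
rewrite /antitone_along => a b Kab; elim: s => [|i s IHs]; first by rewrite !big_nil.
by rewrite !big_cons ler_pM ?prodr_ge0 ?H_anti.
Qed.

Lemma prod_expect_le_expect_prod (s : seq I) :
  \prod_(i <- s) \sum_j p j * H i j <= \sum_j p j * \prod_(i <- s) H i j.
Proof.
elim: s => [|i s IHs].
  by under [in leRHS]eq_bigr do rewrite big_nil mulr1; rewrite big_nil p_sum1.
rewrite big_cons; under [in leRHS]eq_bigr do rewrite big_cons.
have H_co := antitone_along_comonotone (H_anti i) (antitone_along_prod s).
apply: le_trans _ (chebyshev_sum H_co).
by rewrite ler_wpM2l ?sumr_ge0 // => j _; rewrite mulr_ge0.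
Qed.

End Product.

End Chebyshev.

Definition selected_copies r n (S : {set 'I_r * 'I_n}) (j : 'I_n) : nat :=
  #|[set i | (i, j) \in S]|.

Definition staircase r n (k : 'I_n -> nat) : {set 'I_r * 'I_n} :=
  [set x : 'I_r * 'I_n | (x.1 < k x.2)%N].

Section SelectedCopies.
Variables (r n : nat).
Implicit Type S : {set 'I_r * 'I_n}.

Lemma selected_copies_le S j : (selected_copies S j <= r)%N.
Proof. by rewrite -[r in (_ <= r)%N]card_ord max_card. Qed.

Lemma card_selected_copies S : #|S| = (\sum_j selected_copies S j)%N.
Proof.
rewrite -sum1_card (partition_big snd xpredT) //=; apply: eq_bigr => j _.
rewrite (eq_bigl _ _ (fun x => andbC _ _)) (big_graph _ (fun=> j)).
rewrite /selected_copies -sum1_card.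
by apply: eq_bigl => i; rewrite inE.
Qed.

Lemma prod_selected_copies (R : pzSemiRingType) (x : R) S j :
  \prod_i (if (i, j) \in S then x else 1) = x ^+ selected_copies S j.
Proof. by rewrite -big_mkcond -prodr_const; apply: eq_bigl => i; rewrite inE. Qed.

Lemma selected_copies_staircase (k : 'I_n -> nat) j :
  (k j <= r)%N -> selected_copies (staircase r k) j = k j.
Proof.
move=> kj_le; rewrite /selected_copies -sum1_card.
rewrite (eq_bigl (fun i : 'I_r => (i < k j)%N)) => [|i]; last by rewrite !inE.
by rewrite (big_ord_narrow kj_le) sum1_card card_ord.
Qed.

Lemma antitone_along_staircase (R : realFieldType) (x : R) (k : 'I_n -> nat) i :
  x <= 1 -> antitone_along k (fun j => if (i, j) \in staircase r k then x else 1).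
Proof.
move=> x_le1 a b kab; rewrite !inE /=.
by case: ifP => [_ | kb_le]; case: ifP => // ka_lt; rewrite (leq_trans ka_lt kab) in kb_le.
Qed.

End SelectedCopies.

Section SuccessProbability.
Variables (R : realFieldType) (r n : nat) (p : 'I_n -> R) (f : R).
Hypothesis p_sum1 : \sum_j p j = 1.
Implicit Type S : {set 'I_r * 'I_n}.

Lemma repl_probE S :
  repl_prob p f S = 1 - \sum_j p j * f ^+ selected_copies S j.
Proof.
rewrite /repl_prob -p_sum1 -sumrB; apply: eq_bigr => j _.
rewrite -mulr_sumr (sum_fail_weight_graph_responds f S (fun=> j)).
by rewrite prod_selected_copies mulrBr mulr1.
Qed.

Lemma repart_probE S :
  repart_prob p f S = 1 - \prod_i \sum_j p j * (if (i, j) \in S then f else 1).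
Proof.
transitivity (\prod_(i : 'I_r) \sum_j p j
              - \prod_i \sum_j p j * (if (i, j) \in S then f else 1)); last first.
  by rewrite p_sum1 big1_eq.
rewrite !bigA_distr_bigA -sumrB; apply: eq_bigr => loc _.
by rewrite -mulr_sumr (sum_fail_weight_graph_responds f S loc) mulrBr mulr1 big_split.
Qed.

End SuccessProbability.

Theorem theorem2 (R : realFieldType) (r n : nat) (p : 'I_n -> R) (f : R)
  (hr : (1 <= r)%N)
  (hp0 : forall j, 0 <= p j) (hp1 : \sum_(j < n) p j = 1)
  (hf0 : 0 <= f) (hf1 : f <= 1)
  (S : {set 'I_r * 'I_n}) :
  exists S' : {set 'I_r * 'I_n},
    #|S'| = #|S| /\ repl_prob p f S <= repart_prob p f S'.
Proof.
pose k := selected_copies S; pose S' := staircase r k.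
have copies_S' j : selected_copies S' j = k j.
  exact/selected_copies_staircase/selected_copies_le.
exists S'; split.
  by rewrite !card_selected_copies; apply: eq_bigr => j _; rewrite copies_S'.
rewrite repl_probE // repart_probE // lerD2l lerN2 -/k.
under [in leRHS]eq_bigr do rewrite -copies_S' -prod_selected_copies.
apply: prod_expect_le_expect_prod => // [i j | i].
  by case: ifP.
exact: antitone_along_staircase.
Qed.
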